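(* Let $(X,d_X)$, $(Y,d_Y)$ be metric spaces with $Y$ separable, and let $1\le\xi<\omega_1$. For every $f:X\to Y$ the following are equivalent: (i) $f$ is of Baire class $\xi$; (ii) there is a sequence $\langle f_k:k\in\omega\rangle$ converging uniformly to $f$ such that each $f_k$ is locally constant on some $\mathbf{\Sigma}^0_{\xi+1}$-partition of $X$; (iii) there is a sequence $\langle f_k:k\in\omega\rangle$ converging uniformly to $f$ such that each $f_k$ is locally Lipschitz on some $\mathbf{\Sigma}^0_{\xi+1}$-partition of $X$; (iv) there is a sequence $\langle f_k:k\in\omega\rangle$ converging uniformly to $f$ such that each $f_k$ is locally continuous on some $\mathbf{\Sigma}^0_{\xi+1}$-partition of $X$; (v) there is a sequence $\langle f_k:k\in\omega\rangle$ converging uniformly to $f$ such that each $f_k$ is a $\mathbf{\Delta}^0_{\xi+1}$-function.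
   Context: Work in ZF plus countable choice over the reals. $f$ is of Baire class $1$ if $f^{-1}(U)\in\mathbf{\Sigma}^0_2(X)$ for every open $U\subseteq Y$; for $1<\xi<\omega_1$, $f$ is of Baire class $\xi$ if it is the pointwise limit of functions $f_n:X\to Y$ each of Baire class $\xi_n$ for some $1\le\xi_n<\xi$. A $\mathbf{\Gamma}$-partition of $X$ is a family $\langle C_n:n<N\rangle$, $1\le N\le\omega$, of nonempty pairwise disjoint sets in $\mathbf{\Gamma}$ with union $X$. For a set $\mathcal{F}$ of functions $X\to Y$, a function $g:X\to Y$ is locally in $\mathcal{F}$ on the partition $\langle C_n:n<N\rangle$ if there are $g_n\in\mathcal{F}$ with $g\restriction C_n=g_n\restriction C_n$ for all $n<N$ (''locally constant/Lipschitz/continuous'' means $\mathcal{F}$ is the set of constant/Lipschitz/continuous functions $X\to Y$). $g$ is a $\mathbf{\Delta}^0_\eta$-function if $g^{-1}(A)\in\mathbf{\Sigma}^0_\eta(X)$ for every $A\in\mathbf{\Sigma}^0_\eta(Y)$. *)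

From Stdlib Require Import Reals.
Open Scope R_scope.

Definition is_metric {X : Type} (d : X -> X -> R) : Prop :=
  (forall x y, 0 <= d x y) /\
  (forall x y, d x y = 0 <-> x = y) /\
  (forall x y, d x y = d y x) /\
  (forall x y z, d x z <= d x y + d y z).

Definition mopen {X : Type} (d : X -> X -> R) (U : X -> Prop) : Prop :=
  forall x, U x -> exists r, 0 < r /\ forall y, d x y < r -> U y.

Definition separable {Y : Type} (d : Y -> Y -> R) : Prop :=
  exists D : Y -> Prop,
    (exists g : Y -> nat, forall a b, D a -> D b -> g a = g b -> a = b) /\
    (forall y e, 0 < e -> exists z, D z /\ d y z < e).

(** * Countable ordinals, represented as elements of a countable well-order *)
Definition countable_wellorder {W : Type} (lt : W -> W -> Prop) : Prop :=
  (forall a, ~ lt a a) /\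
  (forall a b c, lt a b -> lt b c -> lt a c) /\
  (forall a b, lt a b \/ a = b \/ lt b a) /\
  well_founded lt /\
  (exists g : W -> nat, forall a b, g a = g b -> a = b).

(** [ord_pos lt w]: w >= 1 (w is not the least element) *)
Definition ord_pos {W : Type} (lt : W -> W -> Prop) (w : W) : Prop :=
  exists z, lt z w.

(** [is_one lt w]: w = 1 (w has exactly one predecessor) *)
Definition is_one {W : Type} (lt : W -> W -> Prop) (w : W) : Prop :=
  exists z, lt z w /\ forall v, lt v w -> v = z.

(** * Additive Borel classes  Sigma^0_xi  (xi >= 1) on a metric space
    Sigma^0_1 = open sets;  for xi > 1, Sigma^0_xi = countable unions of
    sets whose complements are in Sigma^0_eta for some 1 <= eta < xi. *)
Inductive Sigma0 {X : Type} (d : X -> X -> R) {W : Type} (lt : W -> W -> Prop)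
  : W -> (X -> Prop) -> Prop :=
| Sigma0_open xi A : is_one lt xi -> mopen d A -> Sigma0 d lt xi A
| Sigma0_union xi A (F : nat -> X -> Prop) (eta : nat -> W) :
    (forall n, ord_pos lt (eta n) /\ lt (eta n) xi) ->
    (forall n, Sigma0 d lt (eta n) (fun x => ~ F n x)) ->
    (forall x, A x <-> exists n, F n x) ->
    Sigma0 d lt xi A.

(** Sigma^0_(xi+1) for xi >= 1: countable unions of sets whose complements are
    in Sigma^0_eta for some 1 <= eta <= xi (i.e. eta < xi+1). *)
Definition Sigma0_succ {X : Type} (d : X -> X -> R) {W : Type}
  (lt : W -> W -> Prop) (xi : W) (A : X -> Prop) : Prop :=
  exists (F : nat -> X -> Prop) (eta : nat -> W),
    (forall n, ord_pos lt (eta n) /\ (lt (eta n) xi \/ eta n = xi)) /\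
    (forall n, Sigma0 d lt (eta n) (fun x => ~ F n x)) /\
    (forall x, A x <-> exists n, F n x).

Definition mconverges {Y : Type} (d : Y -> Y -> R) (u : nat -> Y) (l : Y) : Prop :=
  forall e, 0 < e -> exists N, forall n, (N <= n)%nat -> d (u n) l < e.

Definition unif_converges {X Y : Type} (d : Y -> Y -> R)
  (fs : nat -> X -> Y) (f : X -> Y) : Prop :=
  forall e, 0 < e -> exists N, forall n x, (N <= n)%nat -> d (fs n x) (f x) < e.

Inductive Baire {X Y : Type} (dX : X -> X -> R) (dY : Y -> Y -> R)
  {W : Type} (lt : W -> W -> Prop) : W -> (X -> Y) -> Prop :=
| Baire_one xi f :
    is_one lt xi ->
    (forall U, mopen dY U -> Sigma0_succ dX lt xi (fun x => U (f x))) ->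
    Baire dX dY lt xi f
| Baire_lim xi f (fs : nat -> X -> Y) (eta : nat -> W) :
    (forall n, ord_pos lt (eta n) /\ lt (eta n) xi) ->
    (forall n, Baire dX dY lt (eta n) (fs n)) ->
    (forall x, mconverges dY (fun n => fs n x) (f x)) ->
    Baire dX dY lt xi f.

(** * Partitions.  The length N with 1 <= N <= omega is [Some m] (m >= 1)
    for a finite N = m, and [None] for N = omega. *)
Definition inN (N : option nat) (n : nat) : Prop :=
  match N with Some m => (n < m)%nat | None => True end.

Definition is_partition {X : Type} (Gamma : (X -> Prop) -> Prop)
  (N : option nat) (C : nat -> X -> Prop) : Prop :=
  N <> Some 0%nat /\
  (forall n, inN N n -> (exists x, C n x) /\ Gamma (C n)) /\
  (forall n m x, inN N n -> inN N m -> C n x -> C m x -> n = m) /\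
  (forall x, exists n, inN N n /\ C n x).

Definition locally_in {X Y : Type} (F : (X -> Y) -> Prop) (N : option nat)
  (C : nat -> X -> Prop) (g : X -> Y) : Prop :=
  forall n, inN N n -> exists gn, F gn /\ forall x, C n x -> g x = gn x.

Definition is_constant {X Y : Type} (g : X -> Y) : Prop :=
  exists y, forall x, g x = y.

Definition is_lipschitz {X Y : Type} (dX : X -> X -> R) (dY : Y -> Y -> R)
  (g : X -> Y) : Prop :=
  exists L, 0 <= L /\ forall x y, dY (g x) (g y) <= L * dX x y.

Definition is_continuous {X Y : Type} (dX : X -> X -> R) (dY : Y -> Y -> R)
  (g : X -> Y) : Prop :=
  forall x e, 0 < e -> exists r, 0 < r /\ forall y, dX x y < r -> dY (g x) (g y) < e.

Definition Delta_succ_function {X Y : Type} (dX : X -> X -> R) (dY : Y -> Y -> R)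
  {W : Type} (lt : W -> W -> Prop) (xi : W) (g : X -> Y) : Prop :=
  forall A, Sigma0_succ dY lt xi A -> Sigma0_succ dX lt xi (fun x => A (g x)).

Definition approx_locally {X Y : Type} (dX : X -> X -> R) (dY : Y -> Y -> R)
  {W : Type} (lt : W -> W -> Prop) (xi : W) (F : (X -> Y) -> Prop)
  (f : X -> Y) : Prop :=
  exists fs : nat -> X -> Y,
    unif_converges dY fs f /\
    forall k, exists (N : option nat) (C : nat -> X -> Prop),
      is_partition (Sigma0_succ dX lt xi) N C /\ locally_in F N C (fs k).

(* Call [f] measurable when every [f^-1(U)], [U] open, is Sigma^0_(xi+1).  Baire
   class [xi] implies measurability by induction on the definition; measurability
   passes to uniform limits, and a locally continuous function on a
   Sigma^0_(xi+1)-partition is a Delta^0_(xi+1)-function, so (ii) -> (iii) -> (iv) ->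
   (v) -> measurable are routine.

   Fix a dense sequence [dn].  For measurable [f], the preimage of a ball
   [B(dn i, eps k)] is a countable union of Pi^0_xi sets.  For fixed [k] these pieces
   cover [X]; disjointifying them yields a Delta^0_(xi+1)-partition on which the map
   sending a piece to the centre of its ball is constant and [eps k]-close to [f].

   For measurable [f] and [xi > 1], each piece is a countable intersection of Delta
   sets of classes below [xi].  At stage [n], test [x] against the first [n] of those
   sets for each of the first [n] pieces; among the pieces passing the test, take the
   centre of the first ball of the largest radius index [K] whose first ball meets the
   first balls of all indices [k <= K].  For large [n] the tests are exact on the
   finitely many pieces that matter, which forces the chosen centre close to [f x];
   and stage [n] depends on finitely many Delta sets of one class [eta n < xi], so it
   is measurable at level [eta n], hence of Baire class [eta n] by induction on [xi]. *)

From Stdlib Require Import Arith Reals Lra Lia.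
From Stdlib Require Import Classical ClassicalEpsilon FunctionalExtensionality Cantor.
Open Scope R_scope.

Lemma least_nat (P : nat -> Prop) :
  (exists n, P n) -> exists n, P n /\ forall m, (m < n)%nat -> ~ P m.
Proof.
  intros Hex.
  destruct (dec_inh_nat_subset_has_unique_least_element P (fun n => classic (P n)) Hex)
    as [n [[Pn Hmin] _]].
  exists n. split; [exact Pn|]. intros m Hm Pm. specialize (Hmin m Pm). lia.
Qed.

Lemma greatest_nat (P : nat -> Prop) n :
  (exists K, P K) -> (forall K, P K -> (K <= n)%nat) ->
  exists K, P K /\ forall K', P K' -> (K' <= K)%nat.
Proof.
  revert P. induction n as [|n IH]; intros P [K0 HK0] Hb.
  - exists K0. split; [exact HK0|]. intros K' HK'.
    pose proof (Hb _ HK0). pose proof (Hb _ HK'). lia.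
  - destruct (classic (P (S n))) as [HS|HS].
    + exists (S n). split; [exact HS|]. intros K' HK'. apply Hb; exact HK'.
    + apply IH; [exists K0; exact HK0|]. intros K HK. pose proof (Hb _ HK).
      destruct (Nat.eq_dec K (S n)); [subst; contradiction|lia].
Qed.

Lemma nat_fun_bounded (g : nat -> nat) K : exists M, forall k, (k <= K)%nat -> (g k < M)%nat.
Proof.
  induction K as [|K [M HM]].
  - exists (S (g O)). intros k hk. replace k with O by lia. lia.
  - exists (M + S (g (S K)))%nat. intros k hk.
    destruct (Nat.eq_dec k (S K)) as [->|E]; [lia|]. specialize (HM k ltac:(lia)). lia.
Qed.

Lemma eventually_forall_lt (P : nat -> nat -> Prop) M :
  (forall t, (t < M)%nat -> exists N, forall n, (N <= n)%nat -> P t n) ->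
  exists N, forall n, (N <= n)%nat -> forall t, (t < M)%nat -> P t n.
Proof.
  induction M as [|M IH]; intros H.
  - exists O. intros n _ t ht. lia.
  - destruct IH as [N1 HN1]; [intros t ht; apply H; lia|].
    destruct (H M ltac:(lia)) as [N2 HN2].
    exists (N1 + N2)%nat. intros n hn t ht.
    destruct (Nat.eq_dec t M) as [->|E]; [apply HN2; lia|apply HN1; lia].
Qed.

Definition enumerates (J : nat -> Prop) (N : option nat) (sg : nat -> nat) : Prop :=
  N <> Some O /\ (forall n, inN N n -> J (sg n)) /\
  (forall n n', inN N n -> inN N n' -> sg n = sg n' -> n = n') /\
  (forall t, J t -> exists n, inN N n /\ sg n = t).

Lemma enumerate_bounded (J : nat -> Prop) m :
  (forall t, (m <= t)%nat -> ~ J t) -> (exists t, J t) ->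
  exists p sg, enumerates J (Some p) sg.
Proof.
  revert J. induction m as [|m IH]; intros J Hb Hex.
  - destruct Hex as [t ht]. exfalso. apply (Hb t); auto; lia.
  - destruct (classic (exists t, (t < m)%nat /\ J t)) as [Hlow|Hlow];
      [destruct (classic (J m)) as [Jm|Jm]|].
    + destruct (IH (fun t => (t < m)%nat /\ J t)) as [p [sg [_ [h2 [h3 h4]]]]];
        [intros t ht [h _]; lia|exact Hlow|].
      exists (S p), (fun n => if Nat.eqb n p then m else sg n).
      split; [discriminate|split; [|split]]; simpl.
      * intros n hn. destruct (Nat.eqb_spec n p); [exact Jm|]. apply h2. simpl; lia.
      * intros n n' hn hn'.
        destruct (Nat.eqb_spec n p), (Nat.eqb_spec n' p); try lia.
        -- intros E. pose proof (h2 n' ltac:(simpl; lia)). lia.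
        -- intros E. pose proof (h2 n ltac:(simpl; lia)). lia.
        -- apply h3; simpl; lia.
      * intros t Jt. destruct (Nat.lt_trichotomy t m) as [hl|[->|hl]].
        -- destruct (h4 t (conj hl Jt)) as [n [hn hsn]]. simpl in hn.
           exists n. split; [lia|]. destruct (Nat.eqb_spec n p); [lia|exact hsn].
        -- exists p. split; [lia|]. now rewrite Nat.eqb_refl.
        -- exfalso. apply (Hb t); auto; lia.
    + apply IH; [|exact Hex]. intros t ht.
      destruct (Nat.eq_dec t m) as [->|]; [exact Jm|apply Hb; lia].
    + exists 1%nat, (fun _ => m). split; [discriminate|split; [|split]]; simpl.
      * intros n _. destruct Hex as [t Jt]. destruct (Nat.lt_trichotomy t m) as [hl|[->|hl]];
          [exfalso; eauto|exact Jt|exfalso; apply (Hb t); auto; lia].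
      * intros; lia.
      * intros t Jt. exists O. split; [lia|].
        destruct (Nat.lt_trichotomy t m) as [hl|[hl|hl]]; auto.
        -- exfalso; eauto.
        -- exfalso. apply (Hb t); auto; lia.
Qed.

Lemma enumerate_unbounded (J : nat -> Prop) :
  (forall m, exists t, (m <= t)%nat /\ J t) -> exists sg, enumerates J None sg.
Proof.
  intros Hinf.
  destruct (choice (fun m t => ((m <= t)%nat /\ J t) /\
                              forall s, (s < t)%nat -> ~ ((m <= s)%nat /\ J s)))
    as [next Hnext]; [intros m; apply least_nat, Hinf|].
  set (sg := fix sg (n : nat) : nat := match n with O => next O | S n => next (S (sg n)) end).
  assert (Hinc : forall n, (sg n < sg (S n))%nat).
  { intros n. simpl. destruct (Hnext (S (sg n))) as [[h _] _]. lia. }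
  assert (Hmono : forall n n', (n < n')%nat -> (sg n < sg n')%nat).
  { intros n n' h. induction h; [apply Hinc|]. pose proof (Hinc m). lia. }
  assert (Hge : forall n, (n <= sg n)%nat).
  { induction n; [lia|]. pose proof (Hinc n). lia. }
  assert (Hgap : forall m t, J t -> (m <= t)%nat -> (next m <= t)%nat).
  { intros m t Jt hm. destruct (Hnext m) as [_ hmin].
    destruct (Nat.le_gt_cases (next m) t); auto. exfalso. apply (hmin t); auto. }
  exists sg. split; [discriminate|split; [intros [|n] _; simpl; apply (Hnext _)|split]].
  - intros n n' _ _ he. destruct (Nat.lt_trichotomy n n') as [h|[h|h]]; auto;
      apply Hmono in h; lia.
  - intros t Jt.
    destruct (greatest_nat (fun n => (sg n <= t)%nat) t) as [n [hn hmax]].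
    + exists O. simpl. apply Hgap; auto; lia.
    + intros K hK. pose proof (Hge K). lia.
    + exists n. split; [exact I|]. destruct (Nat.eq_dec (sg n) t) as [e|e]; auto. exfalso.
      assert (hS : (sg (S n) <= t)%nat) by (simpl; apply Hgap; auto; lia).
      pose proof (hmax (S n) hS). lia.
Qed.

Lemma enumerate_nat_subset (J : nat -> Prop) :
  (exists t, J t) -> exists N sg, enumerates J N sg.
Proof.
  intros Hex. destruct (classic (forall m, exists t, (m <= t)%nat /\ J t)) as [Hinf|Hfin].
  - destruct (enumerate_unbounded J Hinf) as [sg Hsg]. eauto.
  - apply not_all_ex_not in Hfin. destruct Hfin as [m hm].
    destruct (enumerate_bounded J m) as [p [sg Hsg]]; [|exact Hex|eauto].
    intros t ht Jt. apply hm. eauto.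
Qed.

Definition wle {W : Type} (lt : W -> W -> Prop) (a b : W) : Prop := lt a b \/ a = b.

Definition wmax {W : Type} (lt : W -> W -> Prop) (a b : W) : W :=
  if excluded_middle_informative (lt a b) then b else a.

Lemma wmax_cases {W : Type} (lt : W -> W -> Prop) a b : wmax lt a b = a \/ wmax lt a b = b.
Proof. unfold wmax. destruct (excluded_middle_informative _); auto. Qed.

Definition pos_below {W : Type} (lt : W -> W -> Prop) (xi v : W) : Prop :=
  ord_pos lt v /\ lt v xi.

Section Ordinals.
Context {W : Type} {lt : W -> W -> Prop} (hW : countable_wellorder lt).

Lemma wlt_irrefl a : ~ lt a a.
Proof. apply hW. Qed.
Lemma wlt_trans a b c : lt a b -> lt b c -> lt a c.
Proof. apply hW. Qed.
Lemma wlt_total a b : lt a b \/ a = b \/ lt b a.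
Proof. apply hW. Qed.
Lemma wlt_wf : well_founded lt.
Proof. apply hW. Qed.

Lemma wle_refl a : wle lt a a.
Proof. right; reflexivity. Qed.
Lemma wle_lt_trans a b c : wle lt a b -> lt b c -> lt a c.
Proof. intros [h| ->] h2; [eapply wlt_trans; eauto|auto]. Qed.
Lemma wlt_le_trans a b c : lt a b -> wle lt b c -> lt a c.
Proof. intros h [h2| <-]; [eapply wlt_trans; eauto|auto]. Qed.
Lemma wle_trans a b c : wle lt a b -> wle lt b c -> wle lt a c.
Proof. intros [h| ->] h2; [left; eapply wlt_le_trans; eauto|auto]. Qed.

Lemma wmax_l a b : wle lt a (wmax lt a b).
Proof. unfold wmax. destruct (excluded_middle_informative _); [left|right]; auto. Qed.
Lemma wmax_r a b : wle lt b (wmax lt a b).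
Proof.
  unfold wmax. destruct (excluded_middle_informative _) as [h|h]; [right; auto|].
  destruct (wlt_total a b) as [h1|[->|h1]]; [contradiction|right|left]; auto.
Qed.

Lemma wlt_min (P : W -> Prop) w : P w -> exists m, P m /\ forall v, P v -> ~ lt v m.
Proof.
  induction w as [w IH] using (well_founded_induction wlt_wf). intros Hw.
  destruct (classic (exists v, lt v w /\ P v)) as [[v [h1 h2]]|Hno].
  - exact (IH v h1 h2).
  - exists w. split; auto. intros v Pv hv. apply Hno; eauto.
Qed.

Lemma one_pos o : is_one lt o -> ord_pos lt o.
Proof. intros [z [hz _]]. exists z; auto. Qed.

Lemma least_pos_is_one w0 :
  ord_pos lt w0 -> exists o, is_one lt o /\ forall w, ord_pos lt w -> wle lt o w.
Proof.
  intros H0. destruct (wlt_min (ord_pos lt) w0 H0) as [o [[z hz] Hmin]].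
  exists o. split.
  - exists z. split; auto. intros v hv.
    destruct (wlt_total v z) as [h|[h|h]]; auto; exfalso.
    + apply (Hmin z); [exists v|]; auto.
    + apply (Hmin v); [exists z|]; auto.
  - intros w Hw. destruct (wlt_total o w) as [h|[h|h]]; [left|right|exfalso]; eauto.
    exact (Hmin w Hw h).
Qed.

Lemma one_no_pos_below o v : is_one lt o -> lt v o -> ~ ord_pos lt v.
Proof.
  intros [z [hz Hu]] hv [u hu]. pose proof (Hu v hv). subst v.
  pose proof (Hu u (wlt_trans _ _ _ hu hz)). subst u. exact (wlt_irrefl _ hu).
Qed.

Lemma pos_below_dominate1 xi (g : nat -> W) :
  (forall m, pos_below lt xi (g m)) ->
  forall n, exists v, pos_below lt xi v /\ forall m, (m <= n)%nat -> wle lt (g m) v.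
Proof.
  intros Hg n. induction n as [|n [v [hv Hv]]].
  - exists (g O). split; auto. intros m hm. replace m with O by lia. apply wle_refl.
  - exists (wmax lt v (g (S n))). split; [destruct (wmax_cases lt v (g (S n))) as [-> | ->]; auto|].
    intros m hm. destruct (Nat.eq_dec m (S n)) as [->|E]; [apply wmax_r|].
    eapply wle_trans; [apply Hv; lia|apply wmax_l].
Qed.

Lemma pos_below_dominate2 xi (g : nat -> nat -> W) :
  (forall t l, pos_below lt xi (g t l)) ->
  forall n, exists v, pos_below lt xi v /\
    forall t l, (t <= n)%nat -> (l <= n)%nat -> wle lt (g t l) v.
Proof.
  intros Hg n.
  destruct (choice (fun t v => pos_below lt xi v /\ forall l, (l <= n)%nat -> wle lt (g t l) v))
    as [row Hrow]; [intros t; exact (pos_below_dominate1 xi (g t) (Hg t) n)|].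
  destruct (pos_below_dominate1 xi row (fun t => proj1 (Hrow t)) n) as [v [hv Hv]].
  exists v. split; [exact hv|]. intros t l ht hl.
  eapply wle_trans; [apply (proj2 (Hrow t)), hl|apply Hv, ht].
Qed.

End Ordinals.

Definition eps (n : nat) : R := / INR (S n).

Lemma eps_pos n : 0 < eps n.
Proof. apply Rinv_0_lt_compat, lt_0_INR. lia. Qed.

Lemma eps_small r : 0 < r -> exists n, eps n < r.
Proof.
  intros hr. destruct (archimed_cor1 r hr) as [N [h1 h2]].
  exists (pred N). unfold eps. replace (S (pred N)) with N by lia. exact h1.
Qed.

Lemma eps_antitone k K : (k <= K)%nat -> eps K <= eps k.
Proof. intros h. apply Rinv_le_contravar; [apply lt_0_INR; lia|apply le_INR; lia]. Qed.

Definition near_compl {X : Type} (d : X -> X -> R) (P : X -> Prop) (r : R) (x : X) : Prop :=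
  exists z, ~ P z /\ d x z < r.

Definition far_from_compl {X : Type} (d : X -> X -> R) (P : X -> Prop) (r : R) (x : X) : Prop :=
  exists r', r < r' /\ forall z, ~ P z -> r' <= d x z.

Section Metric.
Context {X : Type} {d : X -> X -> R} (hd : is_metric d).

Lemma dist_nonneg x y : 0 <= d x y.
Proof. apply hd. Qed.
Lemma dist_refl x : d x x = 0.
Proof. apply hd. reflexivity. Qed.
Lemma dist_sym x y : d x y = d y x.
Proof. apply hd. Qed.
Lemma dist_triangle x y z : d x z <= d x y + d y z.
Proof. apply hd. Qed.

Lemma mopen_ext (A B : X -> Prop) : mopen d A -> (forall x, A x <-> B x) -> mopen d B.
Proof.
  intros H E x Bx. apply E in Bx. destruct (H x Bx) as [r [hr H2]].
  exists r. split; auto. intros y hy. apply E. auto.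
Qed.

Lemma mopen_full : mopen d (fun _ => True).
Proof. intros x _. exists 1. split; [lra|auto]. Qed.

Lemma mopen_empty : mopen d (fun _ => False).
Proof. intros x []. Qed.

Lemma mopen_union (A : nat -> X -> Prop) :
  (forall n, mopen d (A n)) -> mopen d (fun x => exists n, A n x).
Proof.
  intros H x [n hn]. destruct (H n x hn) as [r [hr H2]].
  exists r; split; auto. intros y hy. exists n; auto.
Qed.

Lemma ball_open c r : mopen d (fun y => d c y < r).
Proof.
  intros y hy. exists (r - d c y). split; [lra|]. intros y' hy'.
  pose proof (dist_triangle c y y'). lra.
Qed.

Lemma near_compl_open P r : mopen d (near_compl d P r).
Proof.
  intros x [z [hz hxz]]. exists (r - d x z). split; [lra|]. intros y hy.
  exists z. split; auto. pose proof (dist_triangle y x z). rewrite (dist_sym y x) in H. lra.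
Qed.

Lemma open_as_union U :
  mopen d U -> forall x, U x <-> exists n, ~ near_compl d U (eps n) x.
Proof.
  intros HU x. split.
  - intros hx. destruct (HU x hx) as [r [hr H]]. destruct (eps_small r hr) as [n hn].
    exists n. intros [z [hz hxz]]. apply hz, H. lra.
  - intros [n hn]. apply NNPP. intros hx. apply hn. exists x. rewrite dist_refl. split; auto.
    apply eps_pos.
Qed.

Lemma closed_as_inter P :
  mopen d P -> forall x, ~ P x <-> forall l, near_compl d P (eps l) x.
Proof.
  intros HP x. split.
  - intros hx l. exists x. rewrite dist_refl. split; [exact hx|apply eps_pos].
  - intros H hx. destruct (HP x hx) as [r [hr H2]]. destruct (eps_small r hr) as [l hl].
    destruct (H l) as [z [hz hxz]]. apply hz, H2. lra.
Qed.

Lemma far_from_compl_open P r : mopen d (far_from_compl d P r).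
Proof.
  intros y [r' [hr Hr]]. exists ((r' - r) / 2). split; [lra|]. intros y' hy'.
  exists (r' - (r' - r) / 2). split; [lra|]. intros z hz. pose proof (Hr z hz).
  pose proof (dist_triangle y y' z). lra.
Qed.

Lemma open_at_limit U (u : nat -> X) l :
  mopen d U -> mconverges d u l ->
  U l <-> exists m N, forall n, ~ near_compl d U (2 * eps m) (u (n + N)%nat).
Proof.
  intros HU Hu. split.
  - intros hl. destruct (HU l hl) as [rho [hrho Hr]].
    destruct (eps_small (rho / 3)) as [m hm]; [lra|].
    destruct (Hu (eps m) (eps_pos m)) as [N HN].
    exists m, N. intros n [z [hz hd']].
    assert (rho <= d l z) by (apply Rnot_lt_le; intros h; apply hz, Hr, h).
    pose proof (HN (n + N)%nat ltac:(lia)) as hclose.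
    pose proof (dist_triangle l (u (n + N)%nat) z) as htri.
    rewrite (dist_sym l (u (n + N)%nat)) in htri. lra.
  - intros [m [N hN]]. apply NNPP. intros hl.
    destruct (Hu (2 * eps m)) as [K HK]; [pose proof (eps_pos m); lra|].
    apply (hN K). exists l. split; [exact hl|]. apply HK. lia.
Qed.

Lemma open_at_unif_limit U (u : nat -> X) l :
  mopen d U -> (forall m, d (u m) l < eps m) ->
  U l <-> exists m, far_from_compl d U (2 * eps m) (u m).
Proof.
  intros HU Hu. split.
  - intros hl. destruct (HU l hl) as [rho [hrho Hr]].
    destruct (eps_small (rho / 4)) as [m hm]; [lra|]. exists m, (rho - eps m). split.
    + pose proof (eps_pos m); lra.
    + intros z hz. assert (rho <= d l z) by (apply Rnot_lt_le; intros h; apply hz, Hr, h).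
      pose proof (Hu m) as hclose.
      pose proof (dist_triangle l (u m) z) as htri. rewrite (dist_sym l (u m)) in htri. lra.
  - intros [m [r [hr Hr]]]. apply NNPP. intros hl. pose proof (Hr l hl).
    pose proof (Hu m). pose proof (eps_pos m). lra.
Qed.

End Metric.

(** * Additive Borel classes *)

Lemma union_of_unions {X W : Type} (P : W -> (X -> Prop) -> Prop) (A : nat -> X -> Prop) :
  (forall n, exists (F : nat -> X -> Prop) (eta : nat -> W),
      (forall m, P (eta m) (F m)) /\ forall x, A n x <-> exists m, F m x) ->
  exists (F : nat -> X -> Prop) (eta : nat -> W),
    (forall m, P (eta m) (F m)) /\ forall x, (exists n, A n x) <-> exists m, F m x.
Proof.
  intros H.
  destruct (choice (fun n (p : (nat -> X -> Prop) * (nat -> W)) =>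
      (forall m, P (snd p m) (fst p m)) /\ forall x, A n x <-> exists m, fst p m x)) as [g Hg].
  { intros n. destruct (H n) as [F [eta HF]]. exists (F, eta). exact HF. }
  exists (fun k => fst (g (fst (of_nat k))) (snd (of_nat k))),
         (fun k => snd (g (fst (of_nat k))) (snd (of_nat k))).
  split; [intros k; apply (proj1 (Hg _))|]. intros x. split.
  - intros [n hn]. apply (proj2 (Hg n)) in hn. destruct hn as [m hm].
    exists (to_nat (n, m)). rewrite cancel_of_to. exact hm.
  - intros [k hk]. exists (fst (of_nat k)). apply (proj2 (Hg _)). eauto.
Qed.

Lemma union_or {X : Type} (A B : X -> Prop) (x : X) :
  A x \/ B x <-> exists n : nat, (match n with O => A | S _ => B end) x.
Proof.
  split; [intros [h|h]; [exists O|exists 1%nat]; exact h|intros [[|n] h]; auto].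
Qed.

Definition Delta0_succ {X : Type} (d : X -> X -> R) {W : Type} (lt : W -> W -> Prop)
  (z : W) (A : X -> Prop) : Prop :=
  Sigma0_succ d lt z A /\ Sigma0_succ d lt z (fun x => ~ A x).

Definition bool_of (P : Prop) : bool := if excluded_middle_informative P then true else false.

Lemma bool_of_true (P : Prop) : P -> bool_of P = true.
Proof. unfold bool_of. destruct (excluded_middle_informative P); easy. Qed.

Lemma bool_of_false (P : Prop) : ~ P -> bool_of P = false.
Proof. unfold bool_of. destruct (excluded_middle_informative P); easy. Qed.

Definition set_bit (b : nat -> bool) (m : nat) (v : bool) : nat -> bool :=
  fun t => if Nat.eqb t m then v else b t.

Section Borel.
Context {X : Type} {d : X -> X -> R} (hd : is_metric d).
Context {W : Type} {lt : W -> W -> Prop} (hW : countable_wellorder lt).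

Lemma Sigma0_ext e (A B : X -> Prop) :
  Sigma0 d lt e A -> (forall x, A x <-> B x) -> Sigma0 d lt e B.
Proof.
  intros [e' A' Hone Hop | e' A' F eta H1 H2 H3] E.
  - apply Sigma0_open; auto. eapply mopen_ext; eauto.
  - eapply Sigma0_union; eauto. intros x. rewrite <- E. auto.
Qed.

Lemma Sigma0_pos e A : Sigma0 d lt e A -> ord_pos lt e.
Proof.
  intros [e' A' Hone _ | e' A' F eta H1 _ _]; [apply one_pos; auto|exists (eta O); apply H1].
Qed.

Lemma Sigma0_one_open e A : Sigma0 d lt e A -> is_one lt e -> mopen d A.
Proof.
  intros [e' A' _ Hop | e' A' F eta H1 _ _] Ho; auto.
  exfalso. destruct (H1 O) as [hp hl]. eapply one_no_pos_below; eauto.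
Qed.

Lemma Sigma0_not_one_inv e A :
  Sigma0 d lt e A -> ~ is_one lt e ->
  exists (F : nat -> X -> Prop) (eta : nat -> W),
    (forall n, ord_pos lt (eta n) /\ lt (eta n) e) /\
    (forall n, Sigma0 d lt (eta n) (fun x => ~ F n x)) /\
    (forall x, A x <-> exists n, F n x).
Proof. intros [e' A' Hone _ | e' A' F eta H1 H2 H3] Ho; [contradiction|eauto 10]. Qed.

Lemma Sigma0_mono e z A : Sigma0 d lt e A -> wle lt e z -> Sigma0 d lt z A.
Proof.
  intros H [hl| <-]; [|exact H].
  destruct (classic (is_one lt e)) as [Ho|Ho].
  - apply (Sigma0_union d lt z A (fun n x => ~ near_compl d A (eps n) x) (fun _ => e)).
    + intros n. split; [apply one_pos|]; auto.
    + intros n. apply Sigma0_open; [exact Ho|].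
      apply (mopen_ext (near_compl d A (eps n))); [apply near_compl_open; exact hd|].
      intros x; split; [intros h h'; auto|apply NNPP].
    + apply open_as_union; [exact hd|]. eapply Sigma0_one_open; eauto.
  - destruct (Sigma0_not_one_inv e A H Ho) as [F [eta [H1 [H2 H3]]]].
    apply (Sigma0_union d lt z A F eta); auto.
    intros n. destruct (H1 n). split; auto. eapply wlt_trans; eauto.
Qed.

Lemma Sigma0_of_open e A : mopen d A -> ord_pos lt e -> Sigma0 d lt e A.
Proof.
  intros HA He. destruct (least_pos_is_one hW e He) as [o [Ho Hle]].
  apply (Sigma0_mono o); auto. apply Sigma0_open; auto.
Qed.

Lemma Sigma0_countable_union e (A : nat -> X -> Prop) :
  (forall n, Sigma0 d lt e (A n)) -> Sigma0 d lt e (fun x => exists n, A n x).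
Proof.
  intros H. destruct (classic (is_one lt e)) as [Ho|Ho].
  - apply Sigma0_open; auto. apply mopen_union. intros n. eapply Sigma0_one_open; eauto.
  - destruct (union_of_unions (fun eta F => (ord_pos lt eta /\ lt eta e) /\
                                            Sigma0 d lt eta (fun x => ~ F x)) A)
      as [F [eta [HF HA]]].
    { intros n. destruct (Sigma0_not_one_inv e (A n) (H n) Ho) as [F [eta [h1 [h2 h3]]]].
      exists F, eta. auto. }
    apply (Sigma0_union d lt e _ F eta); [intros m; apply HF..|exact HA].
Qed.

Lemma Sigma0_or e A B :
  Sigma0 d lt e A -> Sigma0 d lt e B -> Sigma0 d lt e (fun x => A x \/ B x).
Proof.
  intros HA HB. eapply Sigma0_ext; [|intros x; symmetry; apply union_or].
  apply Sigma0_countable_union. intros [|n]; auto.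
Qed.

Lemma Sigma0_succ_ext xi (A B : X -> Prop) :
  Sigma0_succ d lt xi A -> (forall x, A x <-> B x) -> Sigma0_succ d lt xi B.
Proof.
  intros [F [eta [h1 [h2 h3]]]] E. exists F, eta. do 2 (split; [assumption|]).
  intros x. rewrite <- E. apply h3.
Qed.

Lemma Sigma0_succ_of_Sigma0 e xi A :
  Sigma0 d lt e A -> wle lt e xi -> Sigma0_succ d lt xi A.
Proof.
  intros H Hle. destruct (classic (is_one lt e)) as [Ho|Ho].
  - exists (fun n x => ~ near_compl d A (eps n) x), (fun _ => e). split; [|split].
    + intros n. split; [apply one_pos; auto|destruct Hle; auto].
    + intros n. apply Sigma0_open; [exact Ho|].
      apply (mopen_ext (near_compl d A (eps n))); [apply near_compl_open; exact hd|].
      intros x; split; [intros h h'; auto|apply NNPP].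
    + apply open_as_union; [exact hd|]. eapply Sigma0_one_open; eauto.
  - destruct (Sigma0_not_one_inv e A H Ho) as [F [eta [h1 [h2 h3]]]].
    exists F, eta. split; [|split]; auto.
    intros n. split; [apply h1|]. left. eapply wlt_le_trans; eauto. apply h1.
Qed.

Lemma Sigma0_succ_of_compl_Sigma0 e xi A :
  Sigma0 d lt e A -> wle lt e xi -> Sigma0_succ d lt xi (fun x => ~ A x).
Proof.
  intros H Hle. exists (fun _ x => ~ A x), (fun _ => e). split; [|split].
  - intros n. split; [eapply Sigma0_pos; eauto|destruct Hle; auto].
  - intros n. eapply Sigma0_ext; eauto. intros x; split; [intros h h2; auto|apply NNPP].
  - intros x. split; [intros h; exists O; auto|intros [_ h]; auto].
Qed.

Lemma Sigma0_succ_of_open xi A : mopen d A -> ord_pos lt xi -> Sigma0_succ d lt xi A.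
Proof.
  intros HA Hp. apply (Sigma0_succ_of_Sigma0 xi); [|apply wle_refl].
  apply Sigma0_of_open; auto.
Qed.

Lemma Sigma0_succ_countable_union xi (A : nat -> X -> Prop) :
  (forall n, Sigma0_succ d lt xi (A n)) -> Sigma0_succ d lt xi (fun x => exists n, A n x).
Proof.
  intros H.
  destruct (union_of_unions (fun eta F => (ord_pos lt eta /\ (lt eta xi \/ eta = xi)) /\
                                          Sigma0 d lt eta (fun x => ~ F x)) A)
    as [F [eta [HF HA]]].
  { intros n. destruct (H n) as [F [eta [h1 [h2 h3]]]]. exists F, eta. auto. }
  exists F, eta. split; [|split]; [intros m; apply HF..|exact HA].
Qed.

Lemma Sigma0_succ_or xi A B :
  Sigma0_succ d lt xi A -> Sigma0_succ d lt xi B -> Sigma0_succ d lt xi (fun x => A x \/ B x).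
Proof.
  intros HA HB. eapply Sigma0_succ_ext; [|intros x; symmetry; apply union_or].
  apply Sigma0_succ_countable_union. intros [|n]; auto.
Qed.

Lemma Sigma0_succ_and xi A B :
  Sigma0_succ d lt xi A -> Sigma0_succ d lt xi B -> Sigma0_succ d lt xi (fun x => A x /\ B x).
Proof.
  intros [F [eta [h1 [h2 h3]]]] [G [zeta [g1 [g2 g3]]]].
  set (lv := fun k => wmax lt (eta (fst (of_nat k))) (zeta (snd (of_nat k)))).
  exists (fun k x => F (fst (of_nat k)) x /\ G (snd (of_nat k)) x), lv. split; [|split].
  - intros k. unfold lv.
    destruct (wmax_cases lt (eta (fst (of_nat k))) (zeta (snd (of_nat k)))) as [-> | ->];
      [apply h1|apply g1].
  - intros k. apply (Sigma0_ext _ (fun x => ~ F (fst (of_nat k)) x \/ ~ G (snd (of_nat k)) x));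
      [|intros x; tauto].
    apply Sigma0_or; eapply Sigma0_mono; [apply h2|apply wmax_l|apply g2|apply (wmax_r hW)].
  - intros x. split.
    + intros [ha hb]. apply h3 in ha as [n hn]. apply g3 in hb as [m hm].
      exists (to_nat (n, m)). rewrite cancel_of_to. auto.
    + intros [k [hk1 hk2]]. split; [apply h3|apply g3]; eauto.
Qed.

Lemma Sigma0_of_Sigma0_succ e xi A :
  Sigma0_succ d lt e A -> lt e xi -> Sigma0 d lt xi A.
Proof.
  intros [F [eta [h1 [h2 h3]]]] hl. apply (Sigma0_union d lt xi A F eta); auto.
  intros n. destruct (h1 n) as [p q]. split; auto. eapply wle_lt_trans; eauto.
Qed.

Lemma Sigma0_succ_mono e xi A :
  Sigma0_succ d lt e A -> wle lt e xi -> Sigma0_succ d lt xi A.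
Proof.
  intros [F [eta [h1 [h2 h3]]]] hl. exists F, eta. split; [|split]; auto.
  intros n. split; [apply h1|]. apply (wle_trans hW _ e); [apply h1|exact hl].
Qed.

Lemma Delta0_succ_ext z (A B : X -> Prop) :
  Delta0_succ d lt z A -> (forall x, A x <-> B x) -> Delta0_succ d lt z B.
Proof.
  intros [h1 h2] E.
  split; [apply (Sigma0_succ_ext z A B h1)|apply (Sigma0_succ_ext z _ _ h2)];
    intros x; specialize (E x); tauto.
Qed.

Lemma Delta0_succ_compl z A : Delta0_succ d lt z A -> Delta0_succ d lt z (fun x => ~ A x).
Proof.
  intros [h1 h2]. split; [exact h2|]. apply (Sigma0_succ_ext z A _ h1).
  intros x; split; [intros h h'; auto|apply NNPP].
Qed.

Lemma Delta0_succ_and z A B :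
  Delta0_succ d lt z A -> Delta0_succ d lt z B -> Delta0_succ d lt z (fun x => A x /\ B x).
Proof.
  intros [a1 a2] [b1 b2]. split; [apply Sigma0_succ_and; auto|].
  eapply Sigma0_succ_ext; [apply (Sigma0_succ_or z _ _ a2 b2)|intros x; tauto].
Qed.

Lemma Delta0_succ_or z A B :
  Delta0_succ d lt z A -> Delta0_succ d lt z B -> Delta0_succ d lt z (fun x => A x \/ B x).
Proof.
  intros ha hb. apply Delta0_succ_compl in ha, hb.
  eapply Delta0_succ_ext; [apply Delta0_succ_compl, (Delta0_succ_and z _ _ ha hb)|].
  intros x. tauto.
Qed.

Lemma Delta0_succ_const z (P : Prop) : ord_pos lt z -> Delta0_succ d lt z (fun _ => P).
Proof.
  intros hz. assert (Htrue : Delta0_succ d lt z (fun _ => True)).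
  { split; [apply Sigma0_succ_of_open; auto; apply mopen_full|].
    eapply Sigma0_succ_ext; [apply (Sigma0_succ_of_open z (fun _ => False)); auto|].
    { apply mopen_empty. }
    intros x; tauto. }
  destruct (classic P) as [hP|hP]; eapply Delta0_succ_ext;
    [exact Htrue|intros x; tauto|apply (Delta0_succ_compl _ _ Htrue)|intros x; tauto].
Qed.

Lemma Delta0_succ_mono e z A : Delta0_succ d lt e A -> wle lt e z -> Delta0_succ d lt z A.
Proof. intros [h1 h2] hl. split; eapply Sigma0_succ_mono; eauto. Qed.

Lemma Delta0_succ_of_Sigma0 e z A : Sigma0 d lt e A -> wle lt e z -> Delta0_succ d lt z A.
Proof.
  intros H hl. split; [eapply Sigma0_succ_of_Sigma0|eapply Sigma0_succ_of_compl_Sigma0]; eauto.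
Qed.

Lemma Delta0_succ_forall_lt z (A : nat -> X -> Prop) n : ord_pos lt z ->
  (forall l, (l < n)%nat -> Delta0_succ d lt z (A l)) ->
  Delta0_succ d lt z (fun x => forall l, (l < n)%nat -> A l x).
Proof.
  intros hz. induction n as [|n IH]; intros H.
  - eapply Delta0_succ_ext; [apply (Delta0_succ_const z True hz)|].
    intros x; split; [intros _ l hl; lia|auto].
  - apply (Delta0_succ_ext z (fun x => (forall l, (l < n)%nat -> A l x) /\ A n x)).
    + apply Delta0_succ_and; [apply IH; intros l hl; apply H; lia|apply H; lia].
    + intros x. split.
      * intros [h1 h2] l hl. destruct (Nat.eq_dec l n) as [->|]; [exact h2|apply h1; lia].
      * intros h. split; [intros l hl|]; apply h; lia.
Qed.

Lemma Delta0_succ_bool_combination z (T : nat -> X -> Prop) : ord_pos lt z ->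
  forall m (Phi : (nat -> bool) -> Prop),
  (forall b b', (forall t, (t < m)%nat -> b t = b' t) -> (Phi b <-> Phi b')) ->
  (forall t, (t < m)%nat -> Delta0_succ d lt z (T t)) ->
  Delta0_succ d lt z (fun x => Phi (fun t => bool_of (T t x))).
Proof.
  intros hz m. induction m as [|m IH]; intros Phi HPhi HT.
  - eapply Delta0_succ_ext; [apply (Delta0_succ_const z (Phi (fun _ => false)) hz)|].
    intros x. apply HPhi. intros t ht; lia.
  - assert (Hset : forall v, Delta0_succ d lt z
                     (fun x => Phi (set_bit (fun t => bool_of (T t x)) m v))).
    { intros v. apply (IH (fun b => Phi (set_bit b m v))); [|intros t ht; apply HT; lia].
      intros b b' hb. apply HPhi. intros t ht. unfold set_bit.
      destruct (Nat.eqb_spec t m); [reflexivity|apply hb; lia]. }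
    assert (HTm : Delta0_succ d lt z (T m)) by (apply HT; lia).
    apply (Delta0_succ_ext z (fun x =>
      (T m x /\ Phi (set_bit (fun t => bool_of (T t x)) m true)) \/
      (~ T m x /\ Phi (set_bit (fun t => bool_of (T t x)) m false)))).
    + apply Delta0_succ_or; apply Delta0_succ_and; auto. apply Delta0_succ_compl; auto.
    + intros x. assert (Hs : forall v, bool_of (T m x) = v ->
           (Phi (set_bit (fun t => bool_of (T t x)) m v) <-> Phi (fun t => bool_of (T t x)))).
      { intros v hv. apply HPhi. intros t ht. unfold set_bit.
        destruct (Nat.eqb_spec t m) as [->|]; auto. }
      destruct (classic (T m x)) as [h|h].
      * rewrite (Hs true (bool_of_true _ h)). tauto.
      * rewrite (Hs false (bool_of_false _ h)). tauto.
Qed.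

Lemma Delta0_succ_disjointify z (Q : nat -> X -> Prop) :
  ord_pos lt z -> (forall t, Delta0_succ d lt z (Q t)) -> (forall x, exists t, Q t x) ->
  exists E : nat -> X -> Prop, (forall t, Delta0_succ d lt z (E t)) /\
    (forall t x, E t x -> Q t x) /\ (forall t t' x, E t x -> E t' x -> t = t') /\
    (forall x, exists t, E t x).
Proof.
  intros hz HQ Hcov. exists (fun t x => Q t x /\ forall s, (s < t)%nat -> ~ Q s x).
  split; [|split; [|split]].
  - intros t. apply Delta0_succ_and; [apply HQ|].
    apply Delta0_succ_forall_lt; [exact hz|]. intros l _. apply Delta0_succ_compl, HQ.
  - intros t x [h _]. exact h.
  - intros t t' x [h1 h2] [g1 g2].
    destruct (Nat.lt_trichotomy t t') as [h|[h|h]]; [exfalso; exact (g2 t h h1)|exact h|].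
    exfalso. exact (h2 t' h g1).
  - intros x. destruct (least_nat (fun t => Q t x)) as [t [h1 h2]]; [apply Hcov|].
    exists t. split; auto.
Qed.

Lemma compl_Sigma0_as_Delta0_inter xi e P :
  Sigma0 d lt e P -> wle lt e xi -> ~ is_one lt xi ->
  exists (S : nat -> X -> Prop) (z : nat -> W),
    (forall l, pos_below lt xi (z l) /\ Delta0_succ d lt (z l) (S l)) /\
    (forall x, ~ P x <-> forall l, S l x).
Proof.
  intros H Hle Hn. destruct (classic (is_one lt e)) as [Ho|Ho].
  - exists (fun l => near_compl d P (eps l)), (fun _ => e). split.
    + intros l. split; [split; [apply one_pos; auto|]|].
      * destruct Hle as [h| ->]; [exact h|contradiction].
      * apply (Delta0_succ_of_Sigma0 e); [|apply wle_refl].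
        apply Sigma0_open; [exact Ho|apply near_compl_open, hd].
    + apply closed_as_inter; [exact hd|]. eapply Sigma0_one_open; eauto.
  - destruct (Sigma0_not_one_inv e P H Ho) as [F [eta [h1 [h2 h3]]]].
    exists (fun l x => ~ F l x), eta. split.
    + intros l. split; [split; [apply h1|eapply wlt_le_trans; eauto; apply h1]|].
      apply (Delta0_succ_of_Sigma0 (eta l)); [apply h2|apply wle_refl].
    + intros x. rewrite h3. split; [intros h l hl; apply h; eauto|intros h [l hl]; exact (h l hl)].
Qed.

End Borel.

(** * Measurable functions *)

Definition Sigma0_succ_measurable {X Y : Type} (dX : X -> X -> R) (dY : Y -> Y -> R)
  {W : Type} (lt : W -> W -> Prop) (xi : W) (f : X -> Y) : Prop :=
  forall U, mopen dY U -> Sigma0_succ dX lt xi (fun x => U (f x)).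

Section Measurable.
Context {X Y : Type} {dX : X -> X -> R} {dY : Y -> Y -> R} (hX : is_metric dX) (hY : is_metric dY).
Context {W : Type} {lt : W -> W -> Prop} (hW : countable_wellorder lt).

Lemma Sigma0_preimage_continuous (g : X -> Y) : is_continuous dX dY g ->
  forall e A, Sigma0 dY lt e A -> Sigma0 dX lt e (fun x => A (g x)).
Proof.
  intros Hg e A H. induction H as [e A Hone Hop | e A F eta H1 H2 IH H3].
  - apply Sigma0_open; auto. intros x hx. destruct (Hop (g x) hx) as [r [hr Hr]].
    destruct (Hg x r hr) as [s [hs Hs]]. exists s. split; auto.
  - apply (Sigma0_union dX lt e _ (fun n x => F n (g x)) eta); auto.
Qed.

Lemma Sigma0_succ_preimage_continuous (g : X -> Y) : is_continuous dX dY g ->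
  forall xi A, Sigma0_succ dY lt xi A -> Sigma0_succ dX lt xi (fun x => A (g x)).
Proof.
  intros Hg xi A [F [eta [h1 [h2 h3]]]]. exists (fun n x => F n (g x)), eta.
  split; [exact h1|split; [|intros x; apply h3]].
  intros n. exact (Sigma0_preimage_continuous g Hg _ _ (h2 n)).
Qed.

Lemma Baire_measurable xi f : Baire dX dY lt xi f -> Sigma0_succ_measurable dX dY lt xi f.
Proof.
  intros H. induction H as [xi f _ HU | xi f fs eta Hpos _ IH Hconv]; [exact HU|].
  intros U HU.
  exists (fun p x => forall n,
            ~ near_compl dY U (2 * eps (fst (of_nat p))) (fs (n + snd (of_nat p))%nat x)),
         (fun _ => xi).
  split; [|split].
  - intros _. split; [exists (eta O); apply Hpos|right; reflexivity].
  - intros p. apply (Sigma0_ext xi (fun x => exists n,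
        near_compl dY U (2 * eps (fst (of_nat p))) (fs (n + snd (of_nat p))%nat x))).
    + apply (Sigma0_countable_union hW). intros n.
      apply (Sigma0_of_Sigma0_succ hW (eta (n + snd (of_nat p))%nat)); [|apply Hpos].
      apply IH, near_compl_open, hY.
    + intros x. split; [intros [n hn] h; exact (h n hn)|].
      intros h. apply NNPP. intros h2. apply h. intros n hn. apply h2. eauto.
  - intros x. rewrite (open_at_limit hY U (fun n => fs n x) (f x) HU (Hconv x)). split.
    + intros [m [N hN]]. exists (to_nat (m, N)). rewrite cancel_of_to. exact hN.
    + intros [p hp]. eauto.
Qed.

Lemma measurable_unif_limit xi (fs : nat -> X -> Y) f :
  unif_converges dY fs f -> (forall k, Sigma0_succ_measurable dX dY lt xi (fs k)) ->
  Sigma0_succ_measurable dX dY lt xi f.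
Proof.
  intros Hu HM U HU.
  destruct (choice (fun m k => forall x, dY (fs k x) (f x) < eps m)) as [kk Hkk].
  { intros m. destruct (Hu (eps m) (eps_pos m)) as [N HN]. exists N. intros x. apply HN. lia. }
  apply (Sigma0_succ_ext xi (fun x => exists m, far_from_compl dY U (2 * eps m) (fs (kk m) x))).
  - apply Sigma0_succ_countable_union. intros m. apply HM, far_from_compl_open, hY.
  - intros x. symmetry. apply (open_at_unif_limit hY U (fun m => fs (kk m) x)); auto.
Qed.

Lemma Delta_function_measurable xi g : ord_pos lt xi ->
  Delta_succ_function dX dY lt xi g -> Sigma0_succ_measurable dX dY lt xi g.
Proof. intros hp H U HU. apply H, Sigma0_succ_of_open; auto. Qed.

Lemma locally_continuous_Delta_function xi N C g : ord_pos lt xi ->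
  is_partition (Sigma0_succ dX lt xi) N C -> locally_in (is_continuous dX dY) N C g ->
  Delta_succ_function dX dY lt xi g.
Proof.
  intros hp [_ [Hp [_ Hcov]]] Hl A HA.
  destruct (choice (fun n gn => inN N n -> is_continuous dX dY gn /\ forall x, C n x -> g x = gn x))
    as [gs Hgs].
  { intros n. destruct (classic (inN N n)) as [h|h].
    - destruct (Hl n h) as [gn hgn]. exists gn. auto.
    - exists g. intros h'; contradiction. }
  apply (Sigma0_succ_ext xi (fun x => exists n, C n x /\ (inN N n /\ A (gs n x)))).
  - apply Sigma0_succ_countable_union. intros n. destruct (classic (inN N n)) as [h|h].
    + apply (Sigma0_succ_ext xi (fun x => C n x /\ A (gs n x))); [|intros x; tauto].
      apply (Sigma0_succ_and hX hW); [apply Hp; auto|].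
      apply Sigma0_succ_preimage_continuous; [apply Hgs; auto|exact HA].
    + apply (Sigma0_succ_ext xi (fun _ => False)); [|intros x; tauto].
      apply Sigma0_succ_of_open; auto. apply mopen_empty.
  - intros x. split.
    + intros [n [hc [hn ha]]]. destruct (Hgs n hn) as [_ e]. rewrite e; auto.
    + intros ha. destruct (Hcov x) as [n [hn hc]]. exists n.
      destruct (Hgs n hn) as [_ e]. rewrite <- e; auto.
Qed.

Lemma approx_locally_continuous_Delta_functions xi f : ord_pos lt xi ->
  approx_locally dX dY lt xi (is_continuous dX dY) f ->
  exists fs, unif_converges dY fs f /\ forall k, Delta_succ_function dX dY lt xi (fs k).
Proof.
  intros hp [fs [Hu Hk]]. exists fs. split; [exact Hu|]. intros k.
  destruct (Hk k) as [N [C [Hp Hl]]]. exact (locally_continuous_Delta_function xi N C _ hp Hp Hl).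
Qed.

Lemma unif_limit_Delta_functions_measurable xi f : ord_pos lt xi ->
  (exists fs, unif_converges dY fs f /\ forall k, Delta_succ_function dX dY lt xi (fs k)) ->
  Sigma0_succ_measurable dX dY lt xi f.
Proof.
  intros hp [fs [Hu Hk]]. apply (measurable_unif_limit xi fs f Hu).
  intros k. apply Delta_function_measurable; auto.
Qed.

Lemma constant_lipschitz (g : X -> Y) : is_constant g -> is_lipschitz dX dY g.
Proof. intros [y hy]. exists 0. split; [lra|]. intros a b. rewrite !hy, (dist_refl hY). nra. Qed.

Lemma lipschitz_continuous (g : X -> Y) : is_lipschitz dX dY g -> is_continuous dX dY g.
Proof.
  intros [L [hL H]] x e he. exists (e / (L + 1)). split; [apply Rdiv_lt_0_compat; lra|].
  intros y hy. pose proof (H x y). pose proof (dist_nonneg hX x y).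
  assert (L * dX x y <= L * (e / (L + 1))) by (apply Rmult_le_compat_l; lra).
  assert (L * (e / (L + 1)) < e)
    by (apply (Rmult_lt_reg_r (L + 1)); [lra|field_simplify; [nra|lra]]).
  lra.
Qed.

End Measurable.

Lemma approx_locally_mono {X Y : Type} {dX : X -> X -> R} {dY : Y -> Y -> R}
  {W : Type} {lt : W -> W -> Prop} xi (F G : (X -> Y) -> Prop) f :
  (forall g, F g -> G g) -> approx_locally dX dY lt xi F f -> approx_locally dX dY lt xi G f.
Proof.
  intros HFG [fs [Hu Hk]]. exists fs. split; auto. intros k. destruct (Hk k) as [N [C [Hp Hl]]].
  exists N, C. split; auto. intros n hn. destruct (Hl n hn) as [gn [h1 h2]]. exists gn. auto.
Qed.

(** * Approximation by locally constant functions *)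

Definition dense_sequence {Y : Type} (d : Y -> Y -> R) (dn : nat -> Y) : Prop :=
  forall y e, 0 < e -> exists i, d y (dn i) < e.

Lemma separable_dense_sequence {Y : Type} (d : Y -> Y -> R) (y0 : Y) :
  separable d -> exists dn, dense_sequence d dn.
Proof.
  intros [D [[g hg] Hd]].
  destruct (choice (fun i z => (exists z', D z' /\ g z' = i) -> D z /\ g z = i)) as [dn Hdn].
  { intros i. destruct (classic (exists z', D z' /\ g z' = i)) as [[z' hz']|hno].
    - exists z'. auto.
    - exists y0. intros h; contradiction. }
  exists dn. intros y e he. destruct (Hd y e he) as [z [hz hyz]]. exists (g z).
  destruct (Hdn (g z)) as [h1 h2]; [eauto|]. rewrite (hg _ _ h1 hz h2). exact hyz.
Qed.

Lemma partition_of_disjoint_cover {X : Type} (Gamma : (X -> Prop) -> Prop) (E : nat -> X -> Prop) :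
  inhabited X -> (forall t, Gamma (E t)) ->
  (forall t t' x, E t x -> E t' x -> t = t') -> (forall x, exists t, E t x) ->
  exists N sg, is_partition Gamma N (fun n => E (sg n)).
Proof.
  intros [x0] HG Hdisj Hcov.
  destruct (enumerate_nat_subset (fun t => exists x, E t x)) as [N [sg [hN [hJ [hinj hsurj]]]]].
  { destruct (Hcov x0) as [t ht]. eauto. }
  exists N, sg. split; [exact hN|split; [|split]].
  - intros n hn. split; [apply hJ, hn|apply HG].
  - intros n m x hn hm h1 h2. apply hinj; auto. eapply Hdisj; eauto.
  - intros x. destruct (Hcov x) as [t ht]. destruct (hsurj t (ex_intro _ x ht)) as [n [hn <-]].
    eauto.
Qed.

Lemma constant_on_disjoint_cover {X Y : Type} (E : nat -> X -> Prop) (c : nat -> Y) :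
  (forall t t' x, E t x -> E t' x -> t = t') -> (forall x, exists t, E t x) ->
  exists g : X -> Y, forall t x, E t x -> g x = c t.
Proof.
  intros Hdisj Hcov. exists (fun x => c (epsilon (inhabits O) (fun t => E t x))).
  intros t x ht. f_equal. apply (Hdisj _ _ x); [apply epsilon_spec; eauto|exact ht].
Qed.

Section Pieces.
Context {X Y : Type} {dX : X -> X -> R} {dY : Y -> Y -> R} (hX : is_metric dX) (hY : is_metric dY).
Context {W : Type} {lt : W -> W -> Prop} (hW : countable_wellorder lt).

(* [t] codes a triple [(i, k, j)]: [Q t] is the [j]-th set of a Sigma^0_(xi+1)
   decomposition of the preimage of the ball [B(dn i, eps k)], [c t = dn i], [r t = k]. *)
Lemma measurable_ball_pieces xi f (dn : nat -> Y) :
  dense_sequence dY dn -> Sigma0_succ_measurable dX dY lt xi f ->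
  exists (c : nat -> Y) (r : nat -> nat) (Q : nat -> X -> Prop),
    (forall t, exists e, ord_pos lt e /\ wle lt e xi /\ Sigma0 dX lt e (fun x => ~ Q t x)) /\
    (forall t x, Q t x -> dY (c t) (f x) < eps (r t)) /\
    (forall x k, exists t, r t = k /\ Q t x).
Proof.
  intros Hd Hf.
  destruct (choice (fun (ik : nat * nat) (p : (nat -> X -> Prop) * (nat -> W)) =>
     (forall j, ord_pos lt (snd p j) /\ wle lt (snd p j) xi) /\
     (forall j, Sigma0 dX lt (snd p j) (fun x => ~ fst p j x)) /\
     (forall x, dY (dn (fst ik)) (f x) < eps (snd ik) <-> exists j, fst p j x))) as [Rk HRk].
  { intros [i k]. destruct (Hf _ (ball_open hY (dn i) (eps k))) as [F [eta HF]].
    exists (F, eta). exact HF. }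
  set (i_ t := fst (of_nat t)). set (k_ t := fst (of_nat (snd (of_nat t)))).
  set (j_ t := snd (of_nat (snd (of_nat t)))).
  exists (fun t => dn (i_ t)), k_, (fun t => fst (Rk (i_ t, k_ t)) (j_ t)). split; [|split].
  - intros t. destruct (HRk (i_ t, k_ t)) as [h1 [h2 _]].
    exists (snd (Rk (i_ t, k_ t)) (j_ t)). split; [apply h1|split; [apply h1|apply h2]].
  - intros t x hq. apply (proj2 (proj2 (HRk (i_ t, k_ t)))). exists (j_ t). exact hq.
  - intros x k. destruct (Hd (f x) (eps k) (eps_pos k)) as [i hi]. rewrite (dist_sym hY) in hi.
    apply (proj2 (proj2 (HRk (i, k)))) in hi as [j hj].
    exists (to_nat (i, to_nat (k, j))).
    unfold k_, i_, j_. rewrite !cancel_of_to; cbn [fst snd]. rewrite !cancel_of_to. auto.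
Qed.

Lemma measurable_locally_constant_approx xi (dn : nat -> Y) f k :
  inhabited X -> ord_pos lt xi -> dense_sequence dY dn ->
  Sigma0_succ_measurable dX dY lt xi f ->
  exists g : X -> Y, (forall x, dY (g x) (f x) < eps k) /\
    exists N C, is_partition (Sigma0_succ dX lt xi) N C /\ locally_in is_constant N C g.
Proof.
  intros hXne hp Hd Hf.
  destruct (measurable_ball_pieces xi f dn Hd Hf) as [c [r [Q [HQlev [HQ1 HQ2]]]]].
  set (Qk := fun t x => r t = k /\ Q t x).
  assert (HQD : forall t, Delta0_succ dX lt xi (Qk t)).
  { intros t. apply (Delta0_succ_and hX hW); [apply (Delta0_succ_const hX hW); exact hp|].
    destruct (HQlev t) as [e [_ [he HS]]].
    eapply Delta0_succ_ext; [apply Delta0_succ_compl, (Delta0_succ_of_Sigma0 hX hW e); eauto|].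
    intros x. split; [apply NNPP|intros h h'; auto]. }
  destruct (Delta0_succ_disjointify hX hW xi Qk hp HQD (fun x => HQ2 x k))
    as [E [HED [HEQ [Hdisj Hcov]]]].
  destruct (constant_on_disjoint_cover E c Hdisj Hcov) as [g Hg].
  exists g. split.
  - intros x. destruct (Hcov x) as [t ht]. rewrite (Hg t x ht).
    destruct (HEQ t x ht) as [<- hq]. exact (HQ1 t x hq).
  - destruct (partition_of_disjoint_cover (Sigma0_succ dX lt xi) E hXne
                (fun t => proj1 (HED t)) Hdisj Hcov) as [N [sg Hpart]].
    exists N, (fun n => E (sg n)). split; [exact Hpart|].
    intros n _. exists (fun _ => c (sg n)). split; [exists (c (sg n)); reflexivity|].
    intros x hx. exact (Hg _ x hx).
Qed.

Lemma measurable_approx_locally_constant xi (dn : nat -> Y) f :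
  inhabited X -> ord_pos lt xi -> dense_sequence dY dn ->
  Sigma0_succ_measurable dX dY lt xi f -> approx_locally dX dY lt xi is_constant f.
Proof.
  intros hXne hp Hd Hf.
  destruct (choice (fun k g => (forall x, dY (g x) (f x) < eps k) /\
      exists N C, is_partition (Sigma0_succ dX lt xi) N C /\ locally_in is_constant N C g))
    as [fs Hfs].
  { intros k. exact (measurable_locally_constant_approx xi dn f k hXne hp Hd Hf). }
  exists fs. split; [|intros k; apply (proj2 (Hfs k))].
  intros e he. destruct (eps_small e he) as [K hK]. exists K. intros n x hn.
  pose proof (proj1 (Hfs n) x). pose proof (eps_antitone _ _ hn). lra.
Qed.

End Pieces.

(** * Selecting a limit from a finite amount of information *)

Section Selection.
Context {Y : Type} (dY : Y -> Y -> R) (hY : is_metric dY) (c : nat -> Y) (r : nat -> nat).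

Definition first_index (n : nat) (b : nat -> bool) (k t : nat) : Prop :=
  (t <= n)%nat /\ b t = true /\ r t = k /\ forall t', (t' < t)%nat -> b t' = true -> r t' <> k.

Definition balls_meet (t t' : nat) : Prop :=
  exists y, dY (c t) y < eps (r t) /\ dY (c t') y < eps (r t').

Definition coherent (n : nat) (b : nat -> bool) (K : nat) : Prop :=
  (K <= n)%nat /\ forall k, (k <= K)%nat ->
    exists t tK, first_index n b k t /\ first_index n b K tK /\ balls_meet t tK.

Definition selected (n : nat) (b : nat -> bool) (t : nat) : Prop :=
  exists K, coherent n b K /\ first_index n b K t /\ forall K', coherent n b K' -> (K' <= K)%nat.

Definition select (n : nat) (b : nat -> bool) : Y := c (epsilon (inhabits O) (selected n b)).

Lemma first_index_unique n b k t t' : first_index n b k t -> first_index n b k t' -> t = t'.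
Proof.
  intros [_ [h2 [h3 h4]]] [_ [g2 [g3 g4]]].
  destruct (Nat.lt_trichotomy t t') as [h|[h|h]]; [exfalso; exact (g4 t h h2 h3)|exact h|].
  exfalso. exact (h4 t' h g2 g3).
Qed.

Lemma select_near n b k0 t0 y :
  coherent n b k0 -> first_index n b k0 t0 -> dY (c t0) y < eps k0 ->
  dY (select n b) y < 3 * eps k0.
Proof.
  intros Hk0 Ht0 Hy.
  assert (Hsel : exists t, selected n b t).
  { destruct (greatest_nat (coherent n b) n) as [K [[hKn hK] hmax]]; [eauto|intros K []; auto|].
    destruct (hK K (le_n K)) as [_ [tK [_ [htK _]]]].
    exists tK, K. split; [split; auto|split; auto]. }
  unfold select. set (ts := epsilon _ _).
  destruct (epsilon_spec _ _ Hsel : selected n b ts) as [K [[_ HK] [HtsK Hmax]]].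
  pose proof (Hmax k0 Hk0) as hk0K.
  destruct (HK k0 hk0K) as [t0' [tK [Ht0' [HtK [z [hz0 hzK]]]]]].
  rewrite (first_index_unique _ _ _ _ _ Ht0' Ht0) in hz0.
  rewrite (first_index_unique _ _ _ _ _ HtK HtsK) in hzK.
  destruct Ht0 as [_ [_ [hr0 _]]]. destruct HtsK as [_ [_ [hrK _]]].
  rewrite hr0 in hz0. rewrite hrK in hzK. pose proof (eps_antitone _ _ hk0K).
  pose proof (dist_triangle hY (c ts) z y) as htri1.
  pose proof (dist_triangle hY z (c t0) y) as htri2.
  rewrite (dist_sym hY z (c t0)) in htri2. lra.
Qed.

Lemma select_converges (y : Y) (q : nat -> Prop) (b : nat -> nat -> bool) :
  (forall t, q t -> dY (c t) y < eps (r t)) ->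
  (forall k, exists t, r t = k /\ q t) ->
  (forall n t, (t <= n)%nat -> q t -> b n t = true) ->
  (forall t, ~ q t -> exists N, forall n, (N <= n)%nat -> b n t = false) ->
  mconverges dY (fun n => select n (b n)) y.
Proof.
  intros Hq Hcov Htrue Hfalse e he.
  destruct (eps_small (e / 3)) as [k0 hk0]; [lra|].
  destruct (choice (fun k t => (r t = k /\ q t) /\ forall s, (s < t)%nat -> ~ (r s = k /\ q s)))
    as [tau Htau]; [intros k; apply least_nat, Hcov|].
  destruct (nat_fun_bounded tau k0) as [M HM].
  destruct (eventually_forall_lt (fun t n => ~ q t -> b n t = false) M) as [N HN].
  { intros t _. destruct (classic (q t)) as [hq|hq]; [exists O; tauto|].
    destruct (Hfalse t hq) as [N HN]. exists N. auto. }
  exists (M + N + k0)%nat. intros n hn.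
  assert (Hfirst : forall k, (k <= k0)%nat -> first_index n (b n) k (tau k)).
  { intros k hk. destruct (Htau k) as [[hr hq] hmin]. specialize (HM k hk).
    split; [lia|split; [apply Htrue; auto; lia|split; [exact hr|]]].
    intros t' ht' hb' hr'.
    destruct (classic (q t')) as [hq'|hq']; [exact (hmin t' ht' (conj hr' hq'))|].
    rewrite (HN n ltac:(lia) t' ltac:(lia) hq') in hb'. discriminate. }
  assert (Hclose : forall k, dY (c (tau k)) y < eps k).
  { intros k. destruct (Htau k) as [[hr hq] _]. specialize (Hq _ hq). now rewrite hr in Hq. }
  assert (Hcoh : coherent n (b n) k0).
  { split; [lia|]. intros k hk. exists (tau k), (tau k0).
    split; [auto|split; [auto|]]. exists y. destruct (Htau k) as [[hr _] _].
    destruct (Htau k0) as [[hr0 _] _]. rewrite hr, hr0. auto. }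
  pose proof (select_near n (b n) k0 (tau k0) y Hcoh (Hfirst k0 (le_n _)) (Hclose k0)). lra.
Qed.

End Selection.

(** * From measurability to Baire class *)

Definition restrict_bits (n : nat) (b : nat -> bool) : nat -> bool :=
  fun t => if Nat.leb t n then b t else false.

Section Limits.
Context {X Y : Type} {dX : X -> X -> R} {dY : Y -> Y -> R} (hX : is_metric dX) (hY : is_metric dY).
Context {W : Type} {lt : W -> W -> Prop} (hW : countable_wellorder lt).

Lemma measurable_pointwise_limit xi (dn : nat -> Y) f :
  ord_pos lt xi -> ~ is_one lt xi -> dense_sequence dY dn ->
  Sigma0_succ_measurable dX dY lt xi f ->
  exists (h : nat -> X -> Y) (eta : nat -> W), (forall n, pos_below lt xi (eta n)) /\
    (forall n, Sigma0_succ_measurable dX dY lt (eta n) (h n)) /\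
    forall x, mconverges dY (fun n => h n x) (f x).
Proof.
  intros hp Hn Hd Hf.
  destruct (measurable_ball_pieces hY xi f dn Hd Hf) as [c [r [Q [HQlev [HQ1 HQ2]]]]].
  destruct (choice (fun (t : nat) (p : (nat -> X -> Prop) * (nat -> W)) =>
      (forall l, pos_below lt xi (snd p l) /\ Delta0_succ dX lt (snd p l) (fst p l)) /\
      (forall x, Q t x <-> forall l, fst p l x))) as [SP HSP].
  { intros t. destruct (HQlev t) as [e [_ [he HS]]].
    destruct (compl_Sigma0_as_Delta0_inter hX hW xi e _ HS he Hn) as [A [z [h1 h2]]].
    exists (A, z). split; [exact h1|]. intros x. rewrite <- h2.
    split; [intros h h'; auto|apply NNPP]. }
  set (A t := fst (SP t)). set (z t := snd (SP t)).
  destruct (choice (fun n v => pos_below lt xi v /\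
      forall t l, (t <= n)%nat -> (l <= n)%nat -> wle lt (z t l) v)) as [eta Heta].
  { intros n. apply (pos_below_dominate2 hW xi z). intros t l. apply (proj1 (HSP t)). }
  set (T n t x := forall l, (l < S n)%nat -> A t l x).
  assert (HT : forall n t, (t <= n)%nat -> Delta0_succ dX lt (eta n) (T n t)).
  { intros n t ht. apply (Delta0_succ_forall_lt hX hW); [apply (proj1 (Heta n))|]. intros l hl.
    apply (Delta0_succ_mono hW (z t l)); [apply (proj1 (HSP t))|apply (Heta n); lia]. }
  exists (fun n x => select dY c r n (restrict_bits n (fun t => bool_of (T n t x)))), eta.
  split; [intros n; apply Heta|split].
  - intros n U HU.
    apply (Delta0_succ_bool_combination hX hW (eta n) (T n) (proj1 (proj1 (Heta n))) (S n)
             (fun b => U (select dY c r n (restrict_bits n b)))).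
    + intros b b' hb. enough (restrict_bits n b = restrict_bits n b') as -> by reflexivity.
      apply functional_extensionality. intros t. unfold restrict_bits.
      destruct (Nat.leb_spec t n); [apply hb; lia|reflexivity].
    + intros t ht. apply HT. lia.
  - intros x. apply (select_converges dY hY c r (f x) (fun t => Q t x)); [auto|auto| |].
    + intros n t ht hq. unfold restrict_bits. destruct (Nat.leb_spec t n); [|lia].
      apply bool_of_true. intros l _. apply (proj2 (HSP t)), hq.
    + intros t hq. rewrite (proj2 (HSP t) x) in hq. apply not_all_ex_not in hq as [l hl].
      exists (S l). intros n hn. unfold restrict_bits. destruct (Nat.leb t n); [|reflexivity].
      apply bool_of_false. intros HTt. apply hl, HTt. lia.
Qed.

Lemma measurable_Baire (dn : nat -> Y) : dense_sequence dY dn ->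
  forall xi, ord_pos lt xi -> forall f, Sigma0_succ_measurable dX dY lt xi f -> Baire dX dY lt xi f.
Proof.
  intros Hd xi. induction xi as [xi IH] using (well_founded_induction (wlt_wf hW)).
  intros hp f Hf. destruct (classic (is_one lt xi)) as [Ho|Ho]; [apply Baire_one; auto|].
  destruct (measurable_pointwise_limit xi dn f hp Ho Hd Hf) as [h [eta [h1 [h2 h3]]]].
  apply (Baire_lim dX dY lt xi f h eta); auto.
  intros n. apply IH; [apply h1|apply h1|apply h2].
Qed.

End Limits.

Theorem mainTheorem10
  (X : Type) (dX : X -> X -> R) (Y : Type) (dY : Y -> Y -> R)
  (hX : is_metric dX) (hY : is_metric dY) (hYsep : separable dY)
  (hXne : inhabited X)
  (W : Type) (lt : W -> W -> Prop) (hW : countable_wellorder lt)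
  (xi : W) (hxi : ord_pos lt xi) (f : X -> Y) :
  let i := Baire dX dY lt xi f in
  (i <-> approx_locally dX dY lt xi is_constant f) /\
  (i <-> approx_locally dX dY lt xi (is_lipschitz dX dY) f) /\
  (i <-> approx_locally dX dY lt xi (is_continuous dX dY) f) /\
  (i <-> exists fs : nat -> X -> Y,
           unif_converges dY fs f /\
           forall k, Delta_succ_function dX dY lt xi (fs k)).
Proof.
  intros i. destruct hXne as [x0].
  destruct (separable_dense_sequence dY (f x0) hYsep) as [dn Hdn].
  set (m := Sigma0_succ_measurable dX dY lt xi f).
  assert (i_m : i -> m) by apply (Baire_measurable hY hW).
  assert (m_i : m -> i) by apply (measurable_Baire hX hY hW dn Hdn xi hxi).
  assert (m_ii : m -> approx_locally dX dY lt xi is_constant f)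
    by apply (measurable_approx_locally_constant hX hY hW xi dn f (inhabits x0) hxi Hdn).
  assert (ii_iii : approx_locally dX dY lt xi is_constant f ->
                   approx_locally dX dY lt xi (is_lipschitz dX dY) f)
    by apply approx_locally_mono, constant_lipschitz, hY.
  assert (iii_iv : approx_locally dX dY lt xi (is_lipschitz dX dY) f ->
                   approx_locally dX dY lt xi (is_continuous dX dY) f)
    by apply approx_locally_mono, lipschitz_continuous, hX.
  pose proof (approx_locally_continuous_Delta_functions (dY := dY) hX hW xi f hxi) as iv_v.
  pose proof (unif_limit_Delta_functions_measurable (dX := dX) hY hW xi f hxi) as v_m.
  fold m in v_m. clearbody i m. tauto.
Qed.
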